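(* In the truncated Gale–Shapley algorithm described in the context, with a weight function $w$ respecting the preferences, for every $i\ge 2$ we have $w(L_i)\le(\Delta-1)\,w_i(B)$.
   Context: Instance: a simple bipartite graph $\mathcal{G}=(R\cup B,E)$ (red nodes $R$, blue nodes $B$) without isolated nodes and with maximum degree $\Delta$, each node having a linear preference order on its neighbours. Algorithm (distributed Gale–Shapley): each blue $b$ keeps $p(b)$ (current partner or $\bot$), initially $\bot$. Each red $r$ keeps a list $C(r)$, initially all neighbours in decreasing preference; $c(r)$ (candidate awaiting response, or $\bot$), initially $\bot$; $p(r)$ (partner or $\bot$), initially $\bot$. Each round consists of a blue turn then a red turn. Blue turn, for each $b$: let $P$ be the set of neighbours that sent `propose'; if $P=\emptyset$ do nothing. Otherwise let $Q=P\cup\{p(b)\}$ if $p(b)\ne\bot$, else $Q=P$; let $q$ be $b$'s most preferred node in $Q$; if $q\ne p(b)$, send `break' to $p(b)$ (if $p(b)\ne\bot$), send `accept' to $q$, and set $p(b)\gets q$; send `reject' to every $r\in P\setminus\{q\}$. Red turn, for each $r$: (1) if $c(r)\neq\bot$, receive the message from $c(r)$; if `accept' set $p(r)\gets c(r)$; if `reject' remove $c(r)$ from $C(r)$; then set $c(r)\gets\bot$. (2) If $p(r)\ne\bot$ and $p(r)$ sent `break', remove $p(r)$ from $C(r)$ and set $p(r)\gets\bot$. (3) If $p(r)=\bot$ and $C(r)$ is nonempty, set $c(r)$ to the first element of $C(r)$ and send `propose' to it. Notation: a subscript $i$ denotes the value at the end of round $i$. An edge $\{r,b\}$ is lost when $r$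 removes $b$ from $C(r)$; $L_i\subseteq E$ is the set of edges lost by the end of round $i$. Let $w:E\to\mathbb{Z}_{>0}$ be a weight function respecting preferences: whenever a node $v$ prefers $x$ over $y$, $w(\{v,x\})\ge w(\{v,y\})$; $w(F)=\sum_{e\in F}w(e)$. For $b\in B$, $w_i(b)=w(\{b,p_i(b)\})$ if $p_i(b)\ne\bot$ and $w_i(b)=0$ otherwise; $w_i(B)=\sum_{b\in B}w_i(b)$. *)

From mathcomp Require Import all_boot.

Set Implicit Arguments.
Unset Strict Implicit.
Unset Printing Implicit Defensive.

Section GS.
Variables (R B : finType).
Variable adj : R -> B -> bool.
(* preferences: rankR r b smaller = r prefers b more; idem for rankB b r.
   (Linearity = injectivity on neighbours, assumed in the theorem.) *)
Variable rankR : R -> B -> nat.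
Variable rankB : B -> R -> nat.

Definition prefR (r : R) (x y : B) := rankR r x < rankR r y.
Definition prefB (b : B) (x y : R) := rankB b x < rankB b y.

Record state := State {
  pB   : B -> option R;
  Cl   : R -> seq B;
  cand : R -> option B;
  pR   : R -> option B
}.

Definition init : state :=
  State (fun _ => None)
        (fun r => sort (fun x y => rankR r x <= rankR r y)
                       (enum [pred b | adj r b]))
        (fun _ => None) (fun _ => None).

(* r sent 'propose' to b in the previous red turn iff c(r) = b *)
Definition proposers (s : state) (b : B) : {set R} :=
  [set r | cand s r == Some b].

Definition Qset (s : state) (b : B) : {set R} :=
  match pB s b with
  | Some p => p |: proposers s b
  | None => proposers s b
  end.

Definition choice (s : state) (b : B) : option R :=
  match [pick r in proposers s b] with
  | None => None
  | Some r0 => Some (fintype.arg_min r0 (mem (Qset s b)) (rankB b))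
  end.

Definition newpB (s : state) (b : B) : option R :=
  match choice s b with Some q => Some q | None => pB s b end.

(* messages sent by b to r during the blue turn *)
Definition brk (s : state) (b : B) (r : R) : bool :=
  match choice s b with
  | Some q => (Some q != pB s b) && (pB s b == Some r)
  | None => false
  end.
Definition acc (s : state) (b : B) (r : R) : bool :=
  match choice s b with
  | Some q => (Some q != pB s b) && (q == r)
  | None => false
  end.
Definition rej (s : state) (b : B) (r : R) : bool :=
  match choice s b with
  | Some q => (r \in proposers s b) && (r != q)
  | None => false
  end.

(* ---- red turn for r (s = state before the round, messages from s) ---- *)
Definition red_step1 (s : state) (r : R) : seq B * option B :=
  match cand s r with
  | Some b => (if rej s b r then rem b (Cl s r) else Cl s r,
               if acc s b r then Some b else pR s r)
  | None => (Cl s r, pR s r)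
  end.

Definition red_step2 (s : state) (r : R) : seq B * option B :=
  let: (C1, p1) := red_step1 s r in
  match p1 with
  | Some b' => if brk s b' r then (rem b' C1, None) else (C1, p1)
  | None => (C1, p1)
  end.

Definition red_step3 (s : state) (r : R) : option B :=
  let: (C2, p2) := red_step2 s r in
  match p2 with
  | None => match C2 with b :: _ => Some b | [::] => None end
  | Some _ => None
  end.

(* one round = blue turn followed by red turn *)
Definition round (s : state) : state :=
  State (newpB s)
        (fun r => (red_step2 s r).1)
        (red_step3 s)
        (fun r => (red_step2 s r).2).

Definition st (i : nat) : state := iter i round init.

(* L_i: edges {r,b} lost (b removed from C(r)) by the end of round i.
   Since C(r) starts as the full neighbourhood and only shrinks, these are
   the edges {r,b} with b no longer in C_i(r). *)
Definition lost (i : nat) : {set R * B} :=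
  [set e | adj e.1 e.2 && (e.2 \notin Cl (st i) e.1)].

Definition maxdeg : nat :=
  maxn (\max_(r : R) #|[set b | adj r b]|) (\max_(b : B) #|[set r | adj r b]|).

End GS.

Definition wset (R B : finType) (w : R -> B -> nat) (F : {set R * B}) : nat :=
  \sum_(e in F) w e.1 e.2.

Definition wB (R B : finType) (w : R -> B -> nat) (s : state R B) : nat :=
  \sum_(b : B) match pB s b with Some r => w r b | None => 0 end.

From mathcomp Require Import all_boot.

(* Every run of the algorithm maintains the invariant that a lost edge {r,b}
   is dominated at b: b is matched to a partner q with w(r,b) <= w(q,b).
   Indeed an edge is lost either because b rejected r in favour of a
   preferred proposer or current partner, or because b broke with r for a
   preferred proposer; afterwards b only ever trades up.  Charging each lost
   edge at b to w_i(b), and noting that the edge to b's partner itself is not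
   lost, every matched blue node pays for at most deg(b) - 1 <= Delta - 1
   lost edges. *)

Set Implicit Arguments.
Unset Strict Implicit.
Unset Printing Implicit Defensive.

Lemma sum_pair_snd (R B : finType) (F : {set R * B}) (f : B -> nat) :
  \sum_(e in F) f e.2 = \sum_b #|[set r | (r, b) \in F]| * f b.
Proof.
rewrite big_mkcond /=.
have -> : \sum_(e : R * B) (if e \in F then f e.2 else 0)
    = \sum_r \sum_b (if (r, b) \in F then f b else 0).
  by rewrite pair_big /=; apply: eq_bigr => -[r b].
rewrite exchange_big /=; apply: eq_bigr => b _.
by rewrite -big_mkcond /= -sum_nat_const; apply: eq_bigl => r; rewrite inE.
Qed.

Section Invariant.

Variables (R B : finType) (adj : R -> B -> bool).
Variables (rankR : R -> B -> nat) (rankB : B -> R -> nat) (w : R -> B -> nat).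
Hypothesis linB :
  forall b x y, adj x b -> adj y b -> rankB b x = rankB b y -> x = y.
Hypothesis wresB :
  forall b x y, adj x b -> adj y b -> prefB rankB b x y -> w y b <= w x b.

Lemma w_rankB_anti b x y : adj x b -> adj y b ->
  rankB b x <= rankB b y -> w y b <= w x b.
Proof.
move=> ax ay; rewrite leq_eqVlt => /orP [/eqP exy|]; last exact: wresB.
by rewrite (linB ax ay exy).
Qed.

Lemma mem_Qset (s : state R B) b r :
  (r \in Qset s b) = (pB s b == Some r) || (cand s r == Some b).
Proof.
rewrite /Qset /proposers; case: (pB s b) => [p|] /=; rewrite ?inE //.
by rewrite eq_sym.
Qed.

Lemma choice_argmin (s : state R B) b q : choice rankB s b = Some q ->
  q \in Qset s b /\ forall r, r \in Qset s b -> rankB b q <= rankB b r.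
Proof.
rewrite /choice; case: pickP => [r0 r0P|//] [<-].
have r0Q : r0 \in Qset s b.
  by rewrite mem_Qset; move: r0P; rewrite inE => ->; rewrite orbT.
by case: (arg_minnP (rankB b) r0Q).
Qed.

Lemma mem_red_step2 (s : state R B) r b : b \in Cl s r ->
  ~~ ((cand s r == Some b) && rej rankB s b r) -> ~~ brk rankB s b r ->
  b \in (red_step2 rankB s r).1.
Proof.
move=> bC no_rej no_brk; rewrite /red_step2 /red_step1.
have keep_brk l (p : option B) : b \in l ->
    b \in (match p with
           | Some b' => if brk rankB s b' r then (rem b' l, None) else (l, p)
           | None => (l, p) end).1.
  case: p => [b'|] //=; case: ifP => brk_b' //= bl; apply: rem_mem => //.
  by apply: contraNneq no_brk => ->; rewrite brk_b'.
case cr: (cand s r) => [b''|] /=; apply: keep_brk => //.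
case: ifP => rej_b'' //; apply: rem_mem => //.
by apply: contraNneq no_rej => ->; rewrite cr eqxx rej_b''.
Qed.

Lemma red_step2_lost (s : state R B) r b : b \in Cl s r ->
  b \notin (red_step2 rankB s r).1 ->
  ((cand s r == Some b) && rej rankB s b r) || brk rankB s b r.
Proof. by move=> bC; apply: contraR; rewrite negb_or => /andP[]; apply: mem_red_step2. Qed.

Lemma red_step2_subseq (s : state R B) r b :
  b \in (red_step2 rankB s r).1 -> b \in Cl s r.
Proof.
rewrite /red_step2 /red_step1.
have from_rem (x : B) l : b \in rem x l -> b \in l by move/mem_rem.
case: (cand s r) => [b''|] /=.
  set C1 := (if rej rankB s b'' r then _ else _).
  have C1C : b \in C1 -> b \in Cl s r by rewrite /C1; case: ifP => // _ /from_rem.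
  case: (if acc rankB s b'' r then _ else _) => [b'|] //=.
  by case: ifP => _ //= /from_rem /C1C.
by case: (pR s r) => [b'|] //=; case: ifP => _ //= /from_rem.
Qed.

Lemma red_step3_mem (s : state R B) r b : red_step3 rankB s r = Some b ->
  b \in (red_step2 rankB s r).1.
Proof.
rewrite /red_step3; case: (red_step2 rankB s r) => [[|x l] [b'|]] //= [->].
exact: mem_head.
Qed.

Record gs_invariant (s : state R B) : Prop := GsInvariant {
  partner_edge : forall b r, pB s b = Some r -> adj r b /\ b \in Cl s r;
  list_edge : forall r b, b \in Cl s r -> adj r b;
  cand_in_list : forall r b, cand s r = Some b -> b \in Cl s r;
  lost_dominated : forall r b, adj r b -> b \notin Cl s r ->
    exists2 q, pB s b = Some q & w r b <= w q b
}.

Variable s : state R B.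
Hypothesis sI : gs_invariant s.

Lemma Qset_edge b r : r \in Qset s b -> adj r b.
Proof.
rewrite mem_Qset => /orP [/eqP /(partner_edge sI) []//|/eqP /(cand_in_list sI)].
exact: list_edge.
Qed.

Lemma choice_best b q r : choice rankB s b = Some q ->
  r \in Qset s b -> w r b <= w q b.
Proof.
move=> /choice_argmin [qQ q_min] rQ.
by apply: w_rankB_anti; [exact: Qset_edge qQ | exact: Qset_edge rQ | exact: q_min].
Qed.

Lemma newpB_trades_up b q : pB s b = Some q ->
  exists2 q', newpB rankB s b = Some q' & w q b <= w q' b.
Proof.
move=> pbq; rewrite /newpB; case cb: (choice rankB s b) => [q'|]; last by exists q.
by exists q' => //; apply: (choice_best cb); rewrite mem_Qset pbq eqxx.
Qed.

Lemma round_partner_edge b r : newpB rankB s b = Some r ->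
  adj r b /\ b \in (red_step2 rankB s r).1.
Proof.
rewrite /newpB; case cb: (choice rankB s b) => [q|] => [[<-{r}]|pbr].
  have [qQ _] := choice_argmin cb.
  have bC : b \in Cl s q.
    move: qQ; rewrite mem_Qset => /orP[/eqP /(partner_edge sI) []//|/eqP].
    exact: cand_in_list.
  split; first exact: list_edge bC.
  apply: mem_red_step2 => //; first by rewrite /rej cb eqxx !andbF.
  by rewrite /brk cb eq_sym; case: (_ == _).
have [rb bC] := partner_edge sI pbr.
split=> //; apply: mem_red_step2 => //.
  by rewrite /rej cb andbF.
by rewrite /brk cb.
Qed.

Lemma round_lost_dominated r b : adj r b -> b \notin (red_step2 rankB s r).1 ->
  exists2 q, newpB rankB s b = Some q & w r b <= w q b.
Proof.
move=> rb bC'; have [bC|bNC] := boolP (b \in Cl s r).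
  rewrite /newpB; case/orP: (red_step2_lost bC bC').
    case/andP => /eqP crb; rewrite /rej; case cb: (choice rankB s b) => [q|] //.
    case/andP=> rP _; exists q => //; apply: (choice_best cb).
    by rewrite mem_Qset; move: rP; rewrite inE => ->; rewrite orbT.
  rewrite /brk; case cb: (choice rankB s b) => [q|] // /andP[_ pbr].
  by exists q => //; apply: (choice_best cb); rewrite mem_Qset pbr.
have [q pbq wq] := lost_dominated sI rb bNC.
have [q' pbq' wq'] := newpB_trades_up pbq.
by exists q' => //; apply: leq_trans wq'.
Qed.

Lemma gs_invariant_round : gs_invariant (round rankB s).
Proof.
split=> /=.
- exact: round_partner_edge.
- by move=> r b /red_step2_subseq /(list_edge sI).
- by move=> r b /red_step3_mem.
- exact: round_lost_dominated.
Qed.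

End Invariant.

Lemma gs_invariant_st (R B : finType) (adj : R -> B -> bool)
    (rankR : R -> B -> nat) (rankB : B -> R -> nat) (w : R -> B -> nat)
    (linB : forall b x y, adj x b -> adj y b -> rankB b x = rankB b y -> x = y)
    (wresB : forall b x y, adj x b -> adj y b -> prefB rankB b x y ->
               w y b <= w x b) (i : nat) :
  gs_invariant adj w (st adj rankR rankB i).
Proof.
elim: i => [|i IHi]; last by rewrite /st iterS; apply: gs_invariant_round.
by split=> //= r b; rewrite mem_sort mem_enum // inE => ->.
Qed.

Lemma card_lost_at_le (R B : finType) (adj : R -> B -> bool)
    (w : R -> B -> nat) (s : state R B) b p :
  gs_invariant adj w s -> pB s b = Some p ->
  #|[set r | adj r b && (b \notin Cl s r)]| <= maxdeg adj - 1.
Proof.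
move=> sI pbp; have [pb bCp] := partner_edge sI pbp.
have lost_sub : [set r | adj r b && (b \notin Cl s r)] \subset [set r | adj r b] :\ p.
  apply/subsetP => r; rewrite !inE => /andP[rb bNC]; rewrite rb andbT.
  by apply: contraNneq bNC => ->.
apply: leq_trans (subset_leq_card lost_sub) _.
have deg_b : #|[set r | adj r b]| <= maxdeg adj.
  apply: leq_trans (leq_maxr _ _).
  exact: (@leq_bigmax B (fun b0 => #|[set r | adj r b0]|) b).
by rewrite (cardsD1 p) inE pb add1n in deg_b; rewrite leq_subRL // (leq_trans _ deg_b).
Qed.

Lemma wset_lost_le (R B : finType) (adj : R -> B -> bool)
    (w : R -> B -> nat) (s : state R B) : gs_invariant adj w s ->
  wset w [set e | adj e.1 e.2 && (e.2 \notin Cl s e.1)] <= (maxdeg adj - 1) * wB w s.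
Proof.
move=> sI; set L := [set e | _].
pose W b := if pB s b is Some q then w q b else 0.
apply: (@leq_trans (\sum_(e in L) W e.2)).
  apply: leq_sum => -[r b]; rewrite inE /= => /andP[rb bNC].
  by have [q pbq wq] := lost_dominated sI rb bNC; rewrite /W pbq.
rewrite sum_pair_snd /wB big_distrr /=; apply: leq_sum => b _.
rewrite /W; case pbq: (pB s b) => [q|]; last by rewrite !muln0.
rewrite leq_mul2r; apply/orP; right.
apply: leq_trans (card_lost_at_le sI pbq).
by apply: subset_leq_card; apply/subsetP => r; rewrite !inE.
Qed.

Theorem lemma5 (R B : finType) (adj : R -> B -> bool)
    (rankR : R -> B -> nat) (rankB : B -> R -> nat) (w : R -> B -> nat)
    (noisoR : forall r : R, exists b : B, adj r b)
    (noisoB : forall b : B, exists r : R, adj r b)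
    (linR : forall r x y, adj r x -> adj r y -> rankR r x = rankR r y -> x = y)
    (linB : forall b x y, adj x b -> adj y b -> rankB b x = rankB b y -> x = y)
    (wpos : forall r b, adj r b -> 0 < w r b)
    (wresR : forall r x y, adj r x -> adj r y -> prefR rankR r x y ->
               w r y <= w r x)
    (wresB : forall b x y, adj x b -> adj y b -> prefB rankB b x y ->
               w y b <= w x b)
    (i : nat) (hi : 2 <= i) :
  wset w (lost adj rankR rankB i) <=
    (maxdeg adj - 1) * wB w (st adj rankR rankB i).
Proof. exact: wset_lost_le (gs_invariant_st rankR linB wresB i). Qed.
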